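(* Let $n\ge1$, $D\ge1$, and let $X_n=\{\mathbf{x}^0,\ldots,\mathbf{x}^{n-1}\}\subseteq\{0,1\}^D$ consist of $n$ pairwise distinct vectors, indexed so that $\mathbf{a}\cdot\mathbf{x}^0<\cdots<\mathbf{a}\cdot\mathbf{x}^{n-1}$ for some $\mathbf{a}\in\mathbb{Z}^D$. Then there is a seven-layer Boolean threshold network with $D$ input nodes and $D$ output nodes that is a perfect autoencoder for $X_n$, in which the designated middle hidden layer has $2\lceil\log_2\sqrt n\rceil$ nodes and the other hidden layers together have $(D+5)\lceil\sqrt n\rceil+D$ nodes.
   Context: A Boolean threshold function is a map $\{0,1\}^h\to\{0,1\}$, $\mathbf{u}\mapsto[\mathbf{w}\cdot\mathbf{u}\ge\theta]$ (value $1$ iff $\mathbf{w}\cdot\mathbf{u}\ge\theta$) with $\mathbf{w}\in\mathbb{Z}^h,\theta\in\mathbb{Z}$. An $L$-layer Boolean threshold network has layers $1,\ldots,L$; layer $1$ is the input; each node of layer $t+1$ computes a Boolean threshold function of the values of layer $t$; layers $2,\ldots,L-1$ are hidden. If layer $k$ is designated the middle layer, the encoder $\mathbf{f}$ is the map from layer $1$ values to layer $k$ values and the decoder $\mathbf{g}$ the map from layer $k$ values to layer $L$ values; the network is a perfect autoencoder for $X_n$ if $\mathbf{g}(\mathbf{f}(\mathbf{x}^i))=\mathbf{x}^i$ for all $i$. *)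

From mathcomp Require Import all_boot all_order all_algebra.
Set Implicit Arguments. Unset Strict Implicit. Unset Printing Implicit Defensive.
Import Order.TTheory GRing.Theory Num.Theory.

(* A node of a Boolean threshold network: weight vector w (integers) and
   threshold theta (integer). *)
Definition node := (seq int * int)%type.
Definition layer := seq node.

Definition node_out (u : seq bool) (nd : node) : bool :=
  (nd.2 <= \sum_(j < size u) nth 0%R nd.1 j * ((nth false u j : nat)%:Z))%R.

Definition layer_out (L : layer) (u : seq bool) : seq bool :=
  map (node_out u) L.

Definition run_layers (Ls : seq layer) (u : seq bool) : seq bool :=
  foldl (fun v L => layer_out L v) u Ls.

(* A network with d input nodes is given by the list Ls of its non-input
   layers (layer 1 = input, layer t+2 = Ls`_t).  Width of layer t+1
   (0-based index t): *)
Definition width (d : nat) (Ls : seq layer) (t : nat) : nat :=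
  if t is t'.+1 then size (nth [::] Ls t') else d.

Definition wf_net (d : nat) (Ls : seq layer) : Prop :=
  forall t, t < size Ls ->
    all (fun nd : node => size nd.1 == width d Ls t) (nth [::] Ls t).

(* ceil(log2 (sqrt n)) = least m with sqrt n <= 2^m, i.e. n <= (2^m)^2. *)
Lemma ex_ceil_log2_sqrt (n : nat) : exists m, n <= (2 ^ m) ^ 2.
Proof.
exists n; apply: (leq_trans (ltnW (ltn_expl n (ltnSn 1)))).
by case: (2 ^ n) => [|k] //; rewrite expnS expn1 leq_pmulr.
Qed.
Definition ceil_log2_sqrt (n : nat) : nat := ex_minn (ex_ceil_log2_sqrt n).

Lemma ex_ceil_sqrt (n : nat) : exists m, n <= m ^ 2.
Proof. by exists n; case: n => [|k] //; rewrite expnS expn1 leq_pmulr. Qed.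
Definition ceil_sqrt (n : nat) : nat := ex_minn (ex_ceil_sqrt n).

Definition dotZ (D : nat) (a : 'I_D -> int) (x : D.-tuple bool) : int :=
  (\sum_(j < D) a j * ((tnth x j : nat)%:Z))%R.

From mathcomp Require Import all_boot all_order all_algebra.
From mathcomp Require Import zify.
Set Implicit Arguments.
Unset Strict Implicit.
Unset Printing Implicit Defensive.
Import Order.TTheory GRing.Theory Num.Theory.

(* Write the rank i of an input as i = q * s + r with s = ceil (sqrt n) and q, r < s.
   Threshold nodes [A m <= a . x] compare i with m, so the first hidden layer outputs q
   in unary; fed back together with x, the second one outputs r in unary.  The middle
   layer turns both into binary (2 ceil (log2 s) nodes) and the next layer turns them
   back into unary.  Then an AND node for every output coordinate d and remainder j
   fires iff r = j and bit d of x^(q s + j) is set, which is a table lookup in the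
   unary code of q, and an OR over j recovers bit d of x^i. *)


Lemma sum_bits q c : \sum_(b < c) 2 ^ b * odd (q %/ 2 ^ b) = q %% 2 ^ c.
Proof.
elim: c q => [|c IHc] q; first by rewrite big_ord0 expn0 modn1.
rewrite big_ord_recl expn0 divn1 mul1n.
under eq_bigr => b _ do rewrite lift0 expnS divnMA -mulnA.
rewrite (_ : \sum_(b < c) 2 * _ = 2 * (q %/ 2 %% 2 ^ c)); last by rewrite -big_distrr IHc.
have q_split : q = odd q + 2 * (q %/ 2) by rewrite divn2 mul2n odd_double_half.
rewrite [in RHS]q_split expnS muln_modr -modnDmr [RHS]modn_small // -muln_modr.
have := ltn_mod (q %/ 2) (2 ^ c); rewrite expn_gt0 /=.
by set r := _ %% _; set t := 2 ^ c; case: (odd q) => /=; lia.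
Qed.

Local Open Scope ring_scope.

Definition dot (w : seq int) (u : seq bool) : int :=
  \sum_(0 <= j < size u) nth 0 w j * (nth false u j : nat)%:Z.

Lemma node_outE u nd : node_out u nd = (nd.2 <= dot nd.1 u).
Proof. by rewrite /node_out /dot big_mkord. Qed.

Lemma dot_cat w1 w2 u1 u2 : size w1 = size u1 ->
  dot (w1 ++ w2) (u1 ++ u2) = dot w1 u1 + dot w2 u2.
Proof.
move=> size_w1; rewrite /dot size_cat.
rewrite (@big_cat_nat _ _ _ (size u1) 0 _ _ _ (leq0n _) (leq_addr _ _)) /=.
congr (_ + _).
  by apply: eq_big_nat => j /andP[_ lt_j]; rewrite !nth_cat size_w1 lt_j.
rewrite -{1}[size u1]add0n big_addn addKn; apply: eq_big_nat => j _.
by rewrite !nth_cat size_w1 ltnNge leq_addl addnK.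
Qed.

Lemma dot_nseq0 k u : dot (nseq k 0) u = 0.
Proof. by rewrite /dot big1 // => j _; rewrite nth_nseq if_same mul0r. Qed.

Lemma dot_mkseq (f : nat -> int) (g : nat -> bool) k :
  dot (mkseq f k) (mkseq g k) = \sum_(0 <= j < k) f j * (g j : nat)%:Z.
Proof.
by rewrite /dot size_mkseq; apply: eq_big_nat => j /andP[_ lt_j]; rewrite !nth_mkseq.
Qed.

Lemma dot_codom D (a : 'I_D -> int) (x : D.-tuple bool) : dot (codom a) x = dotZ a x.
Proof.
rewrite /dot /dotZ size_tuple big_mkord; apply: eq_bigr => j _.
by rewrite codomE (nth_map j) ?size_enum_ord // nth_ord_enum (tnth_nth false).
Qed.

Lemma ler1_bool (b : bool) : (1 <= (b : nat)%:Z) = b.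
Proof. by case: b. Qed.

Definition unary (q K : nat) : seq bool := mkseq (fun k => (k < q)%N) K.
Definition bits (q c : nat) : seq bool := mkseq (fun b => odd (q %/ 2 ^ b)) c.

Definition diff_weights (h : nat -> int) (K : nat) : seq int :=
  mkseq (fun k => h k.+1 - h k) K.
Definition unit_weights (W k : nat) : seq int := mkseq (fun p => (p == k : nat)%:Z) W.
Definition pow2_weights (c : nat) : seq int := mkseq (fun b => (2 ^ b)%:Z) c.

Lemma dot_diff_weights_unary h q K : (q <= K)%N ->
  dot (diff_weights h K) (unary q K) = h q - h 0%N.
Proof.
move=> le_qK; rewrite dot_mkseq (@big_cat_nat _ _ _ q 0 _ _ _ (leq0n _) le_qK) /=.
rewrite [X in _ + X]big_nat_cond [X in _ + X]big1 ?addr0; last first.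
  by move=> k /andP[/andP[le_qk _] _]; rewrite ltnNge le_qk mulr0.
rewrite -telescope_sumr //; apply: eq_big_nat => k /andP[_ lt_kq].
by rewrite lt_kq mulr1.
Qed.

Lemma dot_unit_weights u k : (k < size u)%N ->
  dot (unit_weights (size u) k) u = (nth false u k : nat)%:Z.
Proof.
move=> lt_k; rewrite /dot.
rewrite (eq_big_nat _ _ (F2 := fun j => if j == k then (nth false u j : nat)%:Z else 0)).
  by rewrite -big_mkcond big_nat1_eq /= lt_k.
by move=> j /andP[_ lt_j]; rewrite nth_mkseq //; case: (j == k); rewrite ?mul1r ?mul0r.
Qed.

Lemma dot_pow2_weights_bits q c : (q < 2 ^ c)%N -> dot (pow2_weights c) (bits q c) = q%:Z.
Proof.
move=> lt_q; rewrite dot_mkseq big_mkord.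
rewrite -[in RHS](modn_small lt_q) -sum_bits (big_morph _ PoszD (erefl 0%:Z)).
by apply: eq_bigr => b _; rewrite PoszM.
Qed.

Lemma eq_in_mkseq T (f g : nat -> T) K :
  (forall j, (j < K)%N -> f j = g j) -> mkseq f K = mkseq g K.
Proof.
by move=> eq_fg; apply/eq_in_map => j; rewrite mem_iota add0n => /andP[_ /eq_fg].
Qed.

Lemma layer_out_cat L1 L2 u : layer_out (L1 ++ L2) u = layer_out L1 u ++ layer_out L2 u.
Proof. exact: map_cat. Qed.

Lemma layer_out_mkseq f K u : layer_out (mkseq f K) u = mkseq (fun j => node_out u (f j)) K.
Proof. by rewrite /layer_out -map_comp. Qed.

Definition layer_wf (W : nat) (L : layer) : bool := all (fun nd : node => size nd.1 == W) L.

Lemma layer_wf_cat W L1 L2 : layer_wf W (L1 ++ L2) = layer_wf W L1 && layer_wf W L2.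
Proof. exact: all_cat. Qed.

Lemma wf_net_cons d L Ls : wf_net d (L :: Ls) <-> layer_wf d L /\ wf_net (size L) Ls.
Proof.
split=> [wf | [wfL wfLs] [|t] lt_t //].
  split=> [|t lt_t]; first exact: (wf 0%N).
  by have := wf t.+1 lt_t; case: t {lt_t}.
by have := wfLs t lt_t; case: t {lt_t}.
Qed.

Lemma layer_wf_mkseq W f K : (forall j, size (f j).1 = W) -> layer_wf W (mkseq f K).
Proof. by move=> size_f; apply: all_mapT => j; rewrite size_f. Qed.

Definition padr (k : nat) (nd : node) : node := (nd.1 ++ nseq k 0, nd.2).
Definition padl (k : nat) (nd : node) : node := (nseq k 0 ++ nd.1, nd.2).

Lemma layer_wf_padr W k L : layer_wf W L -> layer_wf (W + k) (map (padr k) L).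
Proof.
move=> /allP wfL; apply/allP => _ /mapP[nd /wfL /eqP <- ->].
by rewrite size_cat size_nseq.
Qed.

Lemma layer_wf_padl W k L : layer_wf W L -> layer_wf (k + W) (map (padl k) L).
Proof.
move=> /allP wfL; apply/allP => _ /mapP[nd /wfL /eqP <- ->].
by rewrite size_cat size_nseq.
Qed.

Lemma layer_out_padr k W L u1 u2 : size u1 = W -> layer_wf W L ->
  layer_out (map (padr k) L) (u1 ++ u2) = layer_out L u1.
Proof.
move=> <- /allP wfL; rewrite /layer_out -map_comp.
apply/eq_in_map => nd /wfL /eqP size_nd.
by rewrite /= !node_outE dot_cat // dot_nseq0 addr0.
Qed.

Lemma layer_out_padl k L u1 u2 : size u1 = k ->
  layer_out (map (padl k) L) (u1 ++ u2) = layer_out L u2.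
Proof.
move=> <-; rewrite /layer_out -map_comp; apply: eq_map => nd.
by rewrite /= !node_outE dot_cat ?size_nseq // dot_nseq0 add0r.
Qed.

Definition copy_node (W j : nat) : node := (unit_weights W j, 1).

Lemma layer_wf_copy W K : layer_wf W (mkseq (copy_node W) K).
Proof. by apply: layer_wf_mkseq => j; rewrite size_mkseq. Qed.

Lemma layer_out_copy W u : size u = W -> layer_out (mkseq (copy_node W) W) u = u.
Proof.
move=> <-; rewrite layer_out_mkseq -[RHS](mkseq_nth false).
apply: eq_in_mkseq => j lt_j.
by rewrite node_outE dot_unit_weights // ler1_bool.
Qed.

Definition cuts_at (A : nat -> int) (v : int) (i : nat) : Prop :=
  forall m, (A m <= v) = (m <= i)%N.

Lemma cuts_of_increasing n (f : 'I_n.+1 -> int) :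
  (forall i j : 'I_n.+1, (i < j)%N -> f i < f j) ->
  exists A : nat -> int, forall i : 'I_n.+1, cuts_at A (f i) i.
Proof.
move=> f_incr; have f_le (i j : 'I_n.+1) : (i <= j)%N -> f i <= f j.
  by rewrite leq_eqVlt => /predU1P[/val_inj -> | /f_incr/ltW].
exists (fun m => if (m < n.+1)%N then f (inord m) else f ord_max + 1) => i m.
case: ltnP => [lt_m | le_m].
  case: leqP => [le_mi | lt_im]; first by apply: f_le; rewrite inordK.
  by apply: lt_geF; apply: f_incr; rewrite inordK.
rewrite leqNgt (leq_trans (ltn_ord i) le_m) /=.
by apply/lt_geF/(le_lt_trans (f_le _ ord_max (leq_ord i))); rewrite ltrDl.
Qed.

Definition quot_node (s : nat) (w : seq int) (A : nat -> int) (k : nat) : node :=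
  (w, A (k.+1 * s)%N).

Lemma layer_out_quot s w A u i K : (0 < s)%N -> cuts_at A (dot w u) i ->
  layer_out (mkseq (quot_node s w A) K) u = unary (i %/ s) K.
Proof.
move=> s_gt0 cutA; rewrite layer_out_mkseq; apply: eq_mkseq => k.
by rewrite node_outE cutA leq_divRL.
Qed.

(* The unary code of q turns the threshold A j.+1 into A (q * s + j.+1). *)
Definition rem_node (s K : nat) (w : seq int) (A : nat -> int) (j : nat) : node :=
  (diff_weights (fun k => - A (k * s + j.+1)%N) K ++ w, A j.+1).

Lemma layer_out_rem s K w A u q r K' : size w = size u -> (q <= K)%N ->
  cuts_at A (dot w u) (q * s + r) ->
  layer_out (mkseq (rem_node s K w A) K') (unary q K ++ u) = unary r K'.
Proof.
move=> size_w le_qK cutA; rewrite layer_out_mkseq; apply: eq_mkseq => j.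
rewrite node_outE dot_cat ?size_mkseq // dot_diff_weights_unary // mul0n add0n.
by rewrite opprK addrAC lerDr addrC subr_ge0 cutA leq_add2l.
Qed.

Definition bin_node (K b : nat) : node :=
  (diff_weights (fun k => (odd (k %/ 2 ^ b) : nat)%:Z) K, 1).

Lemma layer_wf_bin K c : layer_wf K (mkseq (bin_node K) c).
Proof. by apply: layer_wf_mkseq => b; rewrite size_mkseq. Qed.

Lemma layer_out_bin K c q : (q <= K)%N ->
  layer_out (mkseq (bin_node K) c) (unary q K) = bits q c.
Proof.
move=> le_qK; rewrite layer_out_mkseq; apply: eq_mkseq => b.
by rewrite node_outE dot_diff_weights_unary // div0n subr0 ler1_bool.
Qed.

Definition unary_node (c k : nat) : node := (pow2_weights c, k.+1%:Z).

Lemma layer_wf_unary c K : layer_wf c (mkseq (unary_node c) K).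
Proof. by apply: layer_wf_mkseq => k; rewrite size_mkseq. Qed.

Lemma layer_out_unary c K q : (q < 2 ^ c)%N ->
  layer_out (mkseq (unary_node c) K) (bits q c) = unary q K.
Proof.
move=> lt_q; rewrite layer_out_mkseq; apply: eq_mkseq => k.
by rewrite node_outE dot_pow2_weights_bits // lez_nat.
Qed.

Definition and_node (K : nat) (f g : nat -> bool) : node :=
  (diff_weights (fun q => (f q : nat)%:Z) K ++ diff_weights (fun r => (g r : nat)%:Z) K,
   2%:Z - (f 0%N : nat)%:Z - (g 0%N : nat)%:Z).

Lemma node_out_and K f g q r : (q <= K)%N -> (r <= K)%N ->
  node_out (unary q K ++ unary r K) (and_node K f g) = f q && g r.
Proof.
move=> le_qK le_rK.
rewrite node_outE dot_cat ?size_mkseq // !dot_diff_weights_unary //=.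
by case: (f q); case: (f 0%N); case: (g r); case: (g 0%N).
Qed.

Definition lookup_node (s : nat) (T : nat -> nat -> nat -> bool) (p : nat) : node :=
  and_node s (T ((p %/ s)%N) ((p %% s)%N)) (eq_op^~ ((p %% s)%N)).

Lemma layer_out_lookup s N T q r : (q <= s)%N -> (r <= s)%N ->
  layer_out (mkseq (lookup_node s T) N) (unary q s ++ unary r s)
  = mkseq (fun p => ((p %% s)%N == r) && T ((p %/ s)%N) r q) N.
Proof.
move=> le_qs le_rs; rewrite layer_out_mkseq; apply: eq_mkseq => p.
by rewrite node_out_and // andbC eq_sym; case: eqP => // ->.
Qed.

Lemma eqn_divn_modn p d s r : (r < s)%N ->
  (p == d * s + r)%N = ((p %/ s)%N == d) && ((p %% s)%N == r).
Proof.
move=> lt_rs; have s_gt0 : (0 < s)%N by apply: leq_ltn_trans lt_rs.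
apply/eqP/andP => [-> | [/eqP <- /eqP <-]]; last exact: divn_eq.
by rewrite divnMDl // divn_small // addn0 modnMDl modn_small.
Qed.

Definition block_or_node (s N d : nat) : node :=
  (mkseq (fun p => ((p %/ s)%N == d : nat)%:Z) N, 1).

Lemma layer_out_block_or s D r (F : nat -> bool) : (r < s)%N ->
  layer_out (mkseq (block_or_node s (D * s)) D)
            (mkseq (fun p => ((p %% s)%N == r) && F ((p %/ s)%N)) (D * s))
  = mkseq F D.
Proof.
move=> lt_rs; rewrite layer_out_mkseq; apply: eq_in_mkseq => d lt_dD.
rewrite node_outE dot_mkseq.
rewrite (eq_big_nat _ _ (F2 := fun p => if p == (d * s + r)%N then (F d : nat)%:Z else 0)).
  have : (d.+1 * s <= D * s)%N by rewrite leq_mul2r lt_dD orbT.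
  rewrite mulSn => le_ds; rewrite -big_mkcond big_nat1_eq /= (leq_trans _ le_ds) //.
    by rewrite ler1_bool.
  by rewrite addnC ltn_add2r.
move=> p _; rewrite eqn_divn_modn //.
by case: eqP => [-> | _]; case: ((p %% s)%N == r); rewrite ?mul1r ?mul0r ?mulr0.
Qed.

Local Close Scope ring_scope.

Lemma ceil_sqrtP n : n <= ceil_sqrt n ^ 2.
Proof. by rewrite /ceil_sqrt; case: ex_minnP. Qed.

Lemma ceil_sqrt_le_pow2 n : ceil_sqrt n <= 2 ^ ceil_log2_sqrt n.
Proof.
rewrite /ceil_sqrt; case: ex_minnP => m _; apply.
by rewrite /ceil_log2_sqrt; case: ex_minnP.
Qed.

Lemma run_layers_cat Ls1 Ls2 u :
  run_layers (Ls1 ++ Ls2) u = run_layers Ls2 (run_layers Ls1 u).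
Proof. exact: foldl_cat. Qed.

Section Autoencoder.

Variables (D s c : nat) (w : seq int) (A : nat -> int) (T : nat -> nat -> nat -> bool).

Definition quot_layer : layer := mkseq (quot_node s w A) s ++ mkseq (copy_node D) D.
Definition rem_layer : layer :=
  map (padr D) (mkseq (copy_node s) s) ++ mkseq (rem_node s s w A) s.
Definition bin_layer : layer :=
  map (padr s) (mkseq (bin_node s) c) ++ map (padl s) (mkseq (bin_node s) c).
Definition unary_layer : layer :=
  map (padr c) (mkseq (unary_node c) s) ++ map (padl c) (mkseq (unary_node c) s).
Definition lookup_layer : layer := mkseq (lookup_node s T) (D * s).
Definition block_or_layer : layer := mkseq (block_or_node s (D * s)) D.

Definition autoencoder : seq layer :=
  [:: quot_layer; rem_layer; bin_layer; unary_layer; lookup_layer; block_or_layer].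

Lemma autoencoder_widths :
  map size autoencoder = [:: s + D; s + s; c + c; s + s; D * s; D].
Proof. by rewrite /= /lookup_layer /block_or_layer !size_cat !size_map !size_iota. Qed.

Lemma autoencoder_wf : size w = D -> wf_net D autoencoder.
Proof.
move=> size_w; do !(apply/wf_net_cons; split);
  rewrite /= /lookup_layer /block_or_layer ?size_cat ?size_map ?size_iota ?layer_wf_cat //.
- by rewrite layer_wf_copy andbT; apply: layer_wf_mkseq.
- rewrite layer_wf_padr ?layer_wf_copy //.
  by apply: layer_wf_mkseq => j; rewrite size_cat size_mkseq size_w.
- by rewrite layer_wf_padr ?layer_wf_padl ?layer_wf_bin.
- by rewrite layer_wf_padr ?layer_wf_padl ?layer_wf_unary.
- by apply: layer_wf_mkseq => p; rewrite size_cat !size_mkseq.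
- by apply: layer_wf_mkseq => d; rewrite size_mkseq.
Qed.

Lemma run_autoencoder u i : size u = D -> size w = D -> cuts_at A (dot w u) i ->
  i < s ^ 2 -> s <= 2 ^ c ->
  run_layers autoencoder u = mkseq (fun d => T d (i %% s) (i %/ s)) D.
Proof.
move=> size_u size_w cut_i lt_i le_s2c.
have s_gt0 : 0 < s by move: lt_i; rewrite lt0n; apply: contraTneq => ->.
have i_eq := divn_eq i s; set q := i %/ s in i_eq *; set r := i %% s in i_eq *.
have lt_qs : q < s by rewrite ltn_divLR // mulnn.
have lt_rs : r < s by rewrite ltn_mod.
have [le_qs le_rs] := (ltnW lt_qs, ltnW lt_rs).
have [lt_q2c lt_r2c] := (leq_trans lt_qs le_s2c, leq_trans lt_rs le_s2c).
have size_wu : size w = size u by rewrite size_u.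
have cut_qr : cuts_at A (dot w u) (q * s + r) by rewrite -i_eq.
have out1 : layer_out quot_layer u = unary q s ++ u.
  by rewrite layer_out_cat (layer_out_quot _ s_gt0 cut_i) layer_out_copy.
have out2 : layer_out rem_layer (unary q s ++ u) = unary q s ++ unary r s.
  rewrite layer_out_cat (layer_out_padr _ _ (size_mkseq _ _) (layer_wf_copy _ _)).
  by rewrite layer_out_copy ?size_mkseq // (layer_out_rem _ size_wu le_qs cut_qr).
have out3 : layer_out bin_layer (unary q s ++ unary r s) = bits q c ++ bits r c.
  rewrite layer_out_cat (layer_out_padr _ _ (size_mkseq _ _) (layer_wf_bin _ _)).
  by rewrite (layer_out_padl _ _ (size_mkseq _ _)) !layer_out_bin.
have out4 : layer_out unary_layer (bits q c ++ bits r c) = unary q s ++ unary r s.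
  rewrite layer_out_cat (layer_out_padr _ _ (size_mkseq _ _) (layer_wf_unary _ _)).
  by rewrite (layer_out_padl _ _ (size_mkseq _ _)) !layer_out_unary.
rewrite /run_layers /= out1 out2 out3 out4 layer_out_lookup //.
exact: layer_out_block_or.
Qed.

End Autoencoder.

Theorem theorem22 (n D : nat) (x : 'I_n -> D.-tuple bool) :
  1 <= n -> 1 <= D ->
  injective x ->
  (exists a : 'I_D -> int, forall i j : 'I_n, i < j ->
      (dotZ a (x i) < dotZ a (x j))%R) ->
  exists (Ls : seq layer) (m : nat),
    size Ls = 6 /\ wf_net D Ls /\ size (nth [::] Ls 5) = D /\
    1 <= m <= 5 /\
    size (nth [::] Ls m.-1) = 2 * ceil_log2_sqrt n /\
    \sum_(t < 5 | t != m.-1 :> nat) size (nth [::] Ls t)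
       = (D + 5) * ceil_sqrt n + D /\
    (forall i : 'I_n,
          run_layers (drop m Ls) (run_layers (take m Ls) (x i)) = x i).
Proof.
case: n x => [|n] x // _ _ _ [a a_incr].
set s := ceil_sqrt n.+1; set c := ceil_log2_sqrt n.+1.
have [A cutA] := @cuts_of_increasing n (fun i => dotZ a (x i)) a_incr.
pose T d j q := nth false (x (inord (q * s + j))) d.
pose Ls := autoencoder D s c (codom a) A T.
have [size1 size2 size3 size4 size5 size6] := autoencoder_widths D s c (codom a) A T.
exists Ls, 3.
split; first by [].
split; first by apply: autoencoder_wf; rewrite size_codom card_ord.
split; first by rewrite /= size6.
split; first by [].
split; first by rewrite /= size3 mul2n addnn.
split.
  rewrite big_mkcond !big_ord_recr big_ord0 /= size1 size2 size4 size5.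
  lia.
move=> i; rewrite -run_layers_cat cat_take_drop.
have cut_i : cuts_at A (dot (codom a) (x i)) i by rewrite dot_codom; exact: cutA.
rewrite (run_autoencoder T (size_tuple _) _ cut_i) ?size_codom ?card_ord //.
  by rewrite /T -divn_eq inord_val -[RHS](mkseq_nth false) size_tuple.
- exact: leq_trans (ltn_ord i) (ceil_sqrtP _).
- exact: ceil_sqrt_le_pow2.
Qed.
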